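(* Let $X$ be a stacked simplicial complex of dimension $d$ and $c$ a codimension one face of $X$. Let $m\ge 1$ and let $v\in V_m\setminus V_{m-1}$. Then there is a unique facet $f_v$ in $X_m$ containing $v$, and $f_v\setminus\{v\}\subseteq V_{m-1}$.
   Context: A simplicial complex $X$ on a finite vertex set $V$ is a family of subsets (faces) of $V$ closed under taking subsets, every element of $V$ lying in some face; facets are inclusion-maximal faces. $X$ is pure of dimension $d$ if every facet has $d+1$ elements; a codimension one face is a face with $d$ elements. $X$ is stacked if it is pure of some dimension $d$ and its facets can be ordered $F_0,F_1,\dots,F_k$ such that for each $p\ge 1$, $F_p$ contains exactly one vertex $v_p$ not in $F_0\cup\dots\cup F_{p-1}$, and $F_p\setminus\{v_p\}\subseteq F_j$ for some $j<p$. A walk is a sequence of facets $f_1,\dots,f_p$ ($p\ge 1$) such that each $f_i\cap f_{i+1}$ has exactly $d$ elements. Fix a codimension one face $c$. The distance from a facet $f$ to $c$ is the minimal $r\ge1$ such that there is a walk $f_1,\dots,f_r$ with $f_1=f$ and $c\subseteq f_r$. For $m\ge 0$, $X_m$ is the set of facets at distance $\le m$ from $c$ (so $X_0=\emptyset$ and $X_1$ is the set of facets containing $c$). $V_0$ is the vertex set of $c$, and for $m\ge1$, $V_m$ is the set of vertices lying in some facet of $X_m$. *)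

From mathcomp Require Import all_boot.
Set Implicit Arguments. Unset Strict Implicit. Unset Printing Implicit Defensive.

Section Complexes.
Variable V : finType.
Implicit Types (X : {set {set V}}) (F G c : {set V}).

Definition simplicial_complex X : Prop :=
  (forall F G, F \in X -> G \subset F -> G \in X) /\
  (forall v : V, exists2 F, F \in X & v \in F).

Definition facet X F : Prop :=
  F \in X /\ (forall G, G \in X -> F \subset G -> G = F).

Definition pure X (d : nat) : Prop :=
  forall F, facet X F -> #|F| = d.+1.

Definition codim1_face X (d : nat) c : Prop := c \in X /\ #|c| = d.

Definition stacked X : Prop :=
  (exists d, pure X d) /\
  exists s : seq {set V},
    [/\ 0 < size s, uniq s,
        (forall F, F \in s <-> facet X F) &
        forall p, 0 < p < size s ->
          exists v : V,
            nth set0 s p :\: (\bigcup_(j < p) nth set0 s j) = [set v] /\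
            exists2 j, j < p & nth set0 s p :\ v \subset nth set0 s j].

Definition adj (d : nat) : rel {set V} := fun f g => #|f :&: g| == d.

(* a walk f = f_1, f_2, ..., f_r (r = size s + 1) of facets *)
Definition walk X d (f : {set V}) (s : seq {set V}) : Prop :=
  facet X f /\ (forall g, g \in s -> facet X g) /\ path (adj d) f s.

(* f is at distance <= m from c, i.e. f \in X_m *)
Definition in_Xm X d c (m : nat) f : Prop :=
  facet X f /\
  exists s, [/\ walk X d f s, c \subset last f s & (size s).+1 <= m].

Definition in_Vm X d c (m : nat) (v : V) : Prop :=
  if m is 0 then v \in c else exists f, in_Xm X d c m f /\ v \in f.

End Complexes.

(* A facet of X_m through a vertex v of V_m \ V_(m-1) is joined to the face c by
   a walk of length exactly m - 1 whose later facets all lie in X_(m-1), hence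
   avoid v.  Two such facets f <> g would therefore be linked by a "detour": a
   walk from f to g whose interior avoids v.  A stacked complex has no detours:
   in the last facet F of the stacking order used by the walk, the new vertex u of
   F lies in no other facet of the walk, so the walk neighbours of F contain the
   ridge F \ u.  If F is an end of the walk, this forces v into its neighbour;
   otherwise F can be cut out of the walk (its two neighbours are equal or share
   the ridge), and induction on the stacking order and the walk length concludes.
   Finally f \ v lies in the next facet of the walk, which belongs to X_(m-1). *)
From mathcomp Require Import all_boot.
Set Implicit Arguments. Unset Strict Implicit. Unset Printing Implicit Defensive.

Section Adjacency.
Variables (V : finType) (d : nat).
Implicit Types (F G H S : {set V}).

Lemma adjC F G : adj d F G = adj d G F.
Proof. by rewrite /adj setIC. Qed.

Lemma adj_irr F : #|F| = d.+1 -> ~~ adj d F F.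
Proof. by rewrite /adj setIid => ->; rewrite eqn_leq ltnn. Qed.

Lemma eq_setU1_card F S v : #|F| = d.+1 -> #|S| = d -> S \subset F ->
  v \in F -> v \notin S -> F = v |: S.
Proof.
move=> cardF cardS SF vF vS; apply/eqP; rewrite eq_sym eqEcard subUset sub1set vF SF.
by rewrite cardsU1 vS cardF cardS /= add1n.
Qed.

Lemma card_setD1_facet F u : #|F| = d.+1 -> u \in F -> #|F :\ u| = d.
Proof. by move=> cardF uF; move: cardF; rewrite (cardsD1 u) uF => -[]. Qed.

Lemma adj_common G H S : #|G| = d.+1 -> #|H| = d.+1 -> #|S| = d ->
  S \subset G -> S \subset H -> G != H -> adj d G H.
Proof.
move=> cardG cardH cardS SG SH GneqH.
have SGH : S \subset G :&: H by rewrite subsetI SG.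
rewrite /adj eqn_leq -{2}cardS subset_leq_card // andbT -ltnS -cardG ltnNge.
apply: contra GneqH => big.
have /eqP/setIidPl GH : G :&: H == G by rewrite eqEcard subsetIl big.
by rewrite eqEcard GH cardG cardH /=.
Qed.

Lemma adj_setD1_sub F G u : #|F| = d.+1 -> u \in F -> u \notin G -> adj d F G ->
  F :\ u \subset G.
Proof.
move=> cardF uF uG /eqP FG.
suff <- : F :&: G = F :\ u by rewrite subsetIr.
apply/eqP; rewrite eqEcard FG card_setD1_facet // leqnn andbT.
by apply/subsetP=> w /setIP [wF wG]; rewrite !inE wF andbT; apply: contraNneq uG => <-.
Qed.

End Adjacency.

Lemma path_split (T : Type) (e : rel T) x p1 z p2 y :
  path e x (rcons (p1 ++ z :: p2) y) =
  [&& path e x p1, e (last x p1) z & path e z (rcons p2 y)].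
Proof. by rewrite rcons_cat cat_path. Qed.

Lemma path_join (T : eqType) (e : rel T) x p a b q y :
  path e x (rcons p a) -> path e b (rcons q y) -> a = b \/ e a b ->
  exists2 w, path e x (rcons w y) & a \in w /\ {subset w <= p ++ a :: b :: q}.
Proof.
move=> xa bq [ab | ab].
  subst b; exists (rcons p a ++ q); first by rewrite rcons_cat cat_path last_rcons xa.
  split; first by rewrite mem_cat mem_rcons mem_head.
  by move=> g; rewrite !mem_cat mem_rcons !inE => /orP [/orP [->|->]|->]; rewrite ?orbT.
exists (rcons p a ++ b :: q); first by rewrite rcons_cat cat_path last_rcons /= xa ab.
split; first by rewrite mem_cat mem_rcons mem_head.
by move=> g; rewrite !mem_cat mem_rcons !inE => /orP [/orP [->|->]|->]; rewrite ?orbT.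
Qed.

Section Detours.
Variables (V : finType) (d : nat).
Implicit Types (u v : V) (g x y F : {set V}) (p : seq {set V}).

Definition detour v x y p :=
  [/\ path (adj d) x (rcons p y), p != [::], x != y, (v \in x) && (v \in y) &
      {in p, forall g, v \notin g}].

Lemma path_adj_rev x p y :
  path (adj d) x (rcons p y) = path (adj d) y (rcons (rev p) x).
Proof.
have := rev_path (adj d) x (rcons p y); rewrite last_rcons belast_rcons rev_cons => ->.
by apply: eq_path => a b; apply: adjC.
Qed.

Lemma mem_walk_rev x p y g :
  (g \in y :: rcons (rev p) x) = (g \in x :: rcons p y).
Proof. by rewrite !inE !mem_rcons !inE mem_rev orbCA. Qed.

Lemma sub_walk x p p' y :
  {subset p' <= p} -> {subset x :: rcons p' y <= x :: rcons p y}.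
Proof.
by move=> sub g; rewrite !inE !mem_rcons !inE => /or3P [->|->|/sub ->]; rewrite ?orbT.
Qed.

Lemma detour_rev v x y p : detour v x y p -> detour v y x (rev p).
Proof.
case=> xy p0 neq vxy avoid; split; first by rewrite -path_adj_rev.
- by rewrite -size_eq0 size_rev size_eq0.
- by rewrite eq_sym.
- by rewrite andbC.
- by move=> g; rewrite mem_rev; apply: avoid.
Qed.

Lemma detour_sub v x y p p' : detour v x y p ->
  path (adj d) x (rcons p' y) -> p' != [::] -> {subset p' <= p} -> detour v x y p'.
Proof. by case=> _ _ neq vxy avoid xy p0 sub; split=> // g /sub /avoid. Qed.

Lemma detour_start_vertex_shared v x y p u :
  #|x| = d.+1 -> detour v x y p -> u \in x ->
  ~ {in x :: rcons p y, forall g, g != x -> u \notin g}.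
Proof.
case: p => [|g p] cardx [//= /andP [xg _] _ neq /andP [vx vy] avoid] ux new.
have gp : g \in g :: p by rewrite mem_head.
have ug : u \notin g.
  apply: new; first by rewrite inE /= mem_head orbT.
  by apply: contraTneq (avoid g gp) => ->; rewrite negbK.
have /subsetP xg' := adj_setD1_sub cardx ux ug xg.
have [vu | vnu] := eqVneq v u.
  have /negP[] : u \notin y.
    by apply: new; rewrite 1?eq_sym // !in_cons mem_rcons mem_head !orbT.
  by rewrite -vu.
by move: (avoid g gp); rewrite xg' // !inE vnu.
Qed.

Lemma detour_skip_backtrack v x y p1 F p2 :
  detour v x y (p1 ++ F :: p2) -> last x p1 = head y p2 ->
  exists2 p', size p' < size (p1 ++ F :: p2) &
              detour v x y p' /\ {subset p' <= p1 ++ F :: p2}.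
Proof.
move=> dt ab; case: (dt) => + _ neq /andP [vx vy] avoid.
rewrite path_split headI /= => /and4P [xa _ _ br].
case: p2 => [|b p2] /= in dt ab br avoid *.
  have := mem_last x p1; rewrite ab inE => /orP [/eqP yx | yp1].
    by rewrite yx eqxx in neq.
  by move: (avoid y); rewrite mem_cat yp1 vy => /(_ isT).
have vb : v \notin b by apply: avoid; rewrite mem_cat !inE eqxx !orbT.
have p1n : p1 != [::] by apply: contraNneq vb => p10; rewrite -ab p10.
have sub : {subset p1 ++ p2 <= p1 ++ [:: F, b & p2]}.
  by move=> g; rewrite !mem_cat !inE => /orP [->|->]; rewrite ?orbT.
exists (p1 ++ p2); first by rewrite !size_cat ltn_add2l ltnS leqnSn.
split=> //; apply: (detour_sub dt) => //; first by rewrite rcons_cat cat_path xa ab.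
by rewrite -size_eq0 size_cat addn_eq0 size_eq0 negb_and p1n.
Qed.

Lemma detour_skip v x y p1 F p2 :
  detour v x y (p1 ++ F :: p2) -> adj d (last x p1) (head y p2) ->
  p1 ++ p2 != [::] ->
  exists2 p', size p' < size (p1 ++ F :: p2) &
              detour v x y p' /\ {subset p' <= p1 ++ F :: p2}.
Proof.
move=> dt ab p'n; case: (dt) => + _ _ _ _.
rewrite path_split headI /= => /and4P [xa _ _ br].
have sub : {subset p1 ++ p2 <= p1 ++ F :: p2}.
  by move=> g; rewrite !mem_cat inE => /orP [->|->]; rewrite ?orbT.
exists (p1 ++ p2); first by rewrite !size_cat ltn_add2l.
split=> //; apply: (detour_sub dt) => //.
by rewrite rcons_cat cat_path xa headI /= ab.
Qed.

Lemma detour_shortcut v x y p1 F p2 u :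
  {in x :: rcons (p1 ++ F :: p2) y, forall g, #|g| = d.+1} ->
  detour v x y (p1 ++ F :: p2) -> u \in F ->
  {in x :: rcons (p1 ++ F :: p2) y, forall g, g != F -> u \notin g} ->
  exists2 p', size p' < size (p1 ++ F :: p2) &
              detour v x y p' /\ {subset p' <= p1 ++ F :: p2}.
Proof.
move=> card dt uF new; case: (dt) => + _ neq /andP [vx vy] avoid.
rewrite path_split headI /= => /and4P [_ aF Fb _].
rewrite rcons_cat in card new.
set a := last x p1 in aF *; set b := head y p2 in Fb *.
have aW : a \in x :: p1 ++ F :: rcons p2 y.
  by have := mem_last x p1; rewrite !inE mem_cat => /orP [->|->]; rewrite ?orbT.
have bW : b \in x :: p1 ++ F :: rcons p2 y.
  by rewrite inE mem_cat inE /b headI mem_head !orbT.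
have cardF : #|F| = d.+1 by apply: card; rewrite inE mem_cat mem_head !orbT.
have ua : u \notin a by apply: new => //; apply: contraTneq aF => ->; apply: adj_irr.
have ub : u \notin b by apply: new => //; apply: contraTneq Fb => ->; apply: adj_irr.
have Fa : F :\ u \subset a by apply: (adj_setD1_sub cardF uF ua); rewrite adjC.
have Fb' : F :\ u \subset b := adj_setD1_sub cardF uF ub Fb.
have cardFu := card_setD1_facet cardF uF.
have [ab | ab] := eqVneq a b; first exact: detour_skip_backtrack dt ab.
apply: (detour_skip dt (adj_common (card a aW) (card b bW) cardFu Fa Fb' ab)).
apply: contraNneq neq => /eqP; rewrite -size_eq0 size_cat addn_eq0 !size_eq0.
case/andP=> /eqP p10 /eqP p20.
have vFu : v \notin F :\ u.
  by rewrite !inE negb_and avoid ?orbT // mem_cat mem_head orbT.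
have ax : a = x by rewrite /a p10.
have byy : b = y by rewrite /b p20.
rewrite -ax -byy in vx vy *.
by rewrite (eq_setU1_card (card a aW) cardFu Fa vx vFu)
           (eq_setU1_card (card b bW) cardFu Fb' vy vFu).
Qed.

Lemma detour_shorten v x y p F u :
  {in x :: rcons p y, forall g, #|g| = d.+1} -> detour v x y p ->
  F \in x :: rcons p y -> u \in F ->
  {in x :: rcons p y, forall g, g != F -> u \notin g} ->
  exists2 p', size p' < size p & detour v x y p' /\ {subset p' <= p}.
Proof.
move=> card dt; rewrite inE mem_rcons inE => /or3P [/eqP-> | /eqP-> | Fp] uF new.
- by case: (detour_start_vertex_shared (card x (mem_head _ _)) dt uF new).
- have cardy : #|y| = d.+1 by apply: card; rewrite inE mem_rcons mem_head orbT.
  case: (detour_start_vertex_shared cardy (detour_rev dt) uF) => g.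
  by rewrite mem_walk_rev; apply: new.
- case/splitPr: Fp card dt new => p1 p2 card dt new.
  exact: detour_shortcut card dt uF new.
Qed.

End Detours.
Section Stacking.
Variables (V : finType) (d : nat) (s : seq {set V}).
Implicit Types (g x y F G : {set V}) (p : seq {set V}).
Hypothesis s_card : {in s, forall F, #|F| = d.+1}.
Hypothesis s_new : forall q, 0 < q < size s ->
  exists2 u, u \in nth set0 s q & {in take q s, forall G, u \notin G}.

Lemma prefix_no_detour q v x y p :
  {subset x :: rcons p y <= take q s} -> ~ detour d v x y p.
Proof.
elim: q v x y p => [|q IHq] v x y p sub.
  by have := sub x (mem_head _ _); rewrite take0.
have [qs | sq] := ltnP q (size s); last first.
  by apply: IHq; move: sub; rewrite !take_oversize // leqW.
set F := nth set0 s q.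
have takeS : take q.+1 s = rcons (take q s) F := take_nth set0 qs.
have [q0 | qpos] := posnP q.
  move: sub; rewrite takeS q0 take0 => sub [_ _ /negP neq _ _]; apply: neq.
  have := sub y; rewrite inE mem_rcons mem_head orbT => /(_ isT).
  by have := sub x (mem_head _ _); rewrite !inE => /eqP-> /eqP->.
have [u uF u_new] : exists2 u, u \in F & {in take q s, forall G, u \notin G}.
  by apply: s_new; rewrite qpos.
have [n] := ubnP (size p); elim: n => // n IHn in p sub *; rewrite ltnS => pn dt.
have [Fw | Fw] := boolP (F \in x :: rcons p y); last first.
  apply: (IHq v x y p) dt => g gw; have := sub g gw.
  by rewrite takeS mem_rcons inE => /orP [/eqP gF | //]; rewrite -gF gw in Fw.
have card : {in x :: rcons p y, forall g, #|g| = d.+1}.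
  by move=> g /sub /mem_take /s_card.
have new : {in x :: rcons p y, forall g, g != F -> u \notin g}.
  move=> g /sub; rewrite takeS mem_rcons inE => /orP [/eqP -> | gq].
    by rewrite eqxx.
  by move=> _; apply: u_new.
have [p' p'p [dt' sub']] := detour_shorten card dt Fw uF new.
apply: (IHn p') dt'; first by move=> g /(sub_walk sub') /sub.
exact: leq_trans p'p pn.
Qed.

End Stacking.

Definition detour_free (V : finType) (X : {set {set V}}) (d : nat) : Prop :=
  forall v x y p, {in x :: rcons p y, forall g, facet X g} -> ~ detour d v x y p.

Lemma stacked_detour_free (V : finType) (X : {set {set V}}) (d : nat) :
  stacked X -> pure X d -> detour_free X d.
Proof.
case=> _ [s [_ _ s_facet s_order]] pureX v x y p facets.
apply: (@prefix_no_detour _ d s _ _ (size s)); rewrite ?take_size.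
- by move=> F /s_facet /pureX.
- move=> q /[dup] /andP [_ qs] /s_order [u [Hu _]].
  have /setDP [uF uold] : u \in nth set0 s q :\: \bigcup_(j < q) nth set0 s j.
    by rewrite Hu set11.
  exists u => // G /(nthP set0) [j]; rewrite size_take qs => jq <-.
  rewrite nth_take //; apply: contra uold => uj.
  by apply/bigcupP; exists (Ordinal jq).
- by move=> g /facets /s_facet.
Qed.

Section Layers.
Variables (V : finType) (X : {set {set V}}) (d : nat) (c : {set V}).
Hypothesis pureX : pure X d.
Hypothesis card_c : #|c| = d.
Implicit Types (f g h : {set V}) (t : seq {set V}).

Lemma in_Xm_card m f : in_Xm X d c m f -> #|f| = d.+1.
Proof. by case=> /pureX. Qed.

Lemma in_Xm_mono m n f : m <= n -> in_Xm X d c m f -> in_Xm X d c n f.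
Proof.
by move=> mn [Xf [t [w ct st]]]; split=> //; exists t; split=> //; apply: leq_trans mn.
Qed.

Lemma in_Xm_suffix f t h :
  walk X d f t -> c \subset last f t -> h \in t -> in_Xm X d c (size t) h.
Proof.
move=> [_ [tX ft]] ct ht; have Xh := tX h ht.
case/splitPr: ht tX ft ct => t1 t2 tX ft ct.
split=> //; exists t2; split.
- split=> //; split; first by move=> g g2; apply: tX; rewrite mem_cat inE g2 !orbT.
  by move: ft; rewrite cat_path => /andP [_ /= /andP []].
- by rewrite last_cat in ct.
- by rewrite size_cat /= addnS ltnS leq_addl.
Qed.

Lemma in_X1_eq v f : in_Xm X d c 1 f -> v \in f -> v \notin c -> f = v |: c.
Proof.
move=> Xf vf vc; case: (Xf) => _ [[|g t] [_ cf // _]].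
exact: eq_setU1_card (in_Xm_card Xf) card_c cf vf vc.
Qed.

Lemma in_XmS_walk k f : in_Xm X d c k.+2 f -> ~ in_Xm X d c k.+1 f ->
  exists t, [/\ walk X d f t, c \subset last f t, t != [::] &
                {in t, forall h, in_Xm X d c k.+1 h}].
Proof.
move=> [Xf [t [w ct st]]] notXf; exists t; split=> //.
  by apply/negP => /eqP t0; apply: notXf; split=> //; exists t; split=> //; rewrite t0.
by move=> h ht; apply: in_Xm_mono (in_Xm_suffix w ct ht).
Qed.

Lemma in_Xm_vertex_unique k v f g : detour_free X d ->
  in_Xm X d c k.+2 f -> in_Xm X d c k.+2 g -> v \in f -> v \in g ->
  ~ in_Vm X d c k.+1 v -> g = f.
Proof.
move=> free Xf Xg vf vg notVv.
have avoid h : in_Xm X d c k.+1 h -> v \notin h.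
  by move=> Xh; apply/negP => vh; apply: notVv; exists h.
have notXf : ~ in_Xm X d c k.+1 f by move/avoid; rewrite vf.
have notXg : ~ in_Xm X d c k.+1 g by move/avoid; rewrite vg.
have [t [[_ [_ ft]] ct tn tXk]] := in_XmS_walk Xf notXf.
have [r [[_ [_ gr]] cr rn rXk]] := in_XmS_walk Xg notXg.
case/lastP: t tn ct ft tXk => [//|t0 A] _; rewrite last_rcons => cA ft tXk.
case/lastP: r rn cr gr rXk => [//|r0 B] _; rewrite last_rcons => cB gr rXk.
have XA : in_Xm X d c k.+1 A by apply: tXk; rewrite mem_rcons mem_head.
have XB : in_Xm X d c k.+1 B by apply: rXk; rewrite mem_rcons mem_head.
apply/eqP/negPn/negP => neq.
have AB : A = B \/ adj d A B.
  have [-> | nAB] := eqVneq A B; [by left | right].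
  exact: adj_common (in_Xm_card XA) (in_Xm_card XB) card_c cA cB nAB.
rewrite path_adj_rev in gr.
have [w fw [Aw sw]] := path_join ft gr AB.
have wX : {in w, forall h, in_Xm X d c k.+1 h}.
  move=> h /sw; rewrite mem_cat !inE mem_rev.
  case/orP=> [ht | /or3P [/eqP-> | /eqP-> | hr]] //.
    by apply: tXk; rewrite mem_rcons inE ht orbT.
  by apply: rXk; rewrite mem_rcons inE hr orbT.
apply: (free v f g w).
  move=> h; rewrite inE mem_rcons inE => /or3P [/eqP-> | /eqP-> | /wX []] //.
    by case: Xf.
  by case: Xg.
split=> //; first by apply: contraTneq Aw => ->.
- by rewrite eq_sym.
- by rewrite vf vg.
- by move=> h /wX /avoid.
Qed.

Lemma in_Vm_setD1 k v f : in_Xm X d c k.+2 f -> v \in f -> ~ in_Vm X d c k.+1 v ->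
  {in f :\ v, forall w, in_Vm X d c k.+1 w}.
Proof.
move=> Xf vf notVv.
have notXf : ~ in_Xm X d c k.+1 f by move=> Xf'; apply: notVv; exists f.
have [t [[_ [_ ft]] _ tn tXk]] := in_XmS_walk Xf notXf.
case: t tn ft tXk => [//|h t] _ /= /andP [fh _] tXk.
have Xh := tXk h (mem_head _ _).
have vh : v \notin h by apply/negP => vh; apply: notVv; exists h.
have /subsetP fh' := adj_setD1_sub (in_Xm_card Xf) vf vh fh.
by move=> w /fh' wh; exists h.
Qed.

End Layers.

Theorem lemma2p10 (V : finType) (X : {set {set V}}) (d : nat) (c : {set V})
    (m : nat) (v : V) :
  simplicial_complex X -> stacked X -> pure X d -> codim1_face X d c ->
  1 <= m -> in_Vm X d c m v -> ~ in_Vm X d c m.-1 v ->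
  exists f : {set V},
    [/\ in_Xm X d c m f, v \in f,
        (forall g, in_Xm X d c m g -> v \in g -> g = f) &
        forall w, w \in f :\ v -> in_Vm X d c m.-1 w].
Proof.
move=> _ stackedX pureX [_ card_c]; case: m => [//|[|k]] _ [f [Xf vf]] notVv.
  have vc : v \notin c by apply/negP.
  have Ef := in_X1_eq pureX card_c Xf vf vc.
  exists f; split=> //.
    by move=> g Xg vg; rewrite Ef (in_X1_eq pureX card_c Xg vg vc).
  by move=> w; rewrite Ef !inE => /andP [/negPf ->].
exists f; split=> //; last by move=> w; apply: (in_Vm_setD1 pureX Xf vf notVv).
have free := stacked_detour_free stackedX pureX.
by move=> g Xg vg; apply: (in_Xm_vertex_unique pureX card_c free Xf Xg vf vg notVv).
Qed.
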